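(* Let $p$ be a prime, $g\ge 2$, and $\pi=\langle a_1,b_1,\dots,a_g,b_g\mid \prod_{i=1}^g[a_i,b_i]=1\rangle$. Let $r\in\{1,2\}$ and let $H\subset\pi^{\mathrm{ab}}/p$ be a subgroup of rank $\ge r$. Then there exists a surjective homomorphism $q:\pi\to Q=\mathbb{Z}^{\ast r}$ (the free group of rank $r$) such that the composition $H\subset\pi^{\mathrm{ab}}/p\to Q^{\mathrm{ab}}/p\cong(\mathbb{Z}/p)^r$ is surjective. *)

From mathcomp Require Import all_boot all_order all_algebra.
Set Implicit Arguments. Unset Strict Implicit. Unset Printing Implicit Defensive.
Import GRing.Theory.
Local Open Scope ring_scope.

(* The free group F_r = Z^{*r} on generators x_0,...,x_{r-1}, realised as  *)
(* the set of reduced words.  A letter (k, false) is x_k, (k, true) is      *)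
(* x_k^{-1}.                                                                *)
Definition letter (r : nat) := ('I_r * bool)%type.
Definition fword (r : nat) := seq (letter r).

Definition fpush (r : nat) (x : letter r) (w : fword r) : fword r :=
  match w with
  | y :: w' => if (y.1 == x.1) && (y.2 != x.2) then w' else x :: w
  | [::] => [:: x]
  end.

Definition freduce (r : nat) (w : fword r) : fword r := foldr (@fpush r) [::] w.

Definition freduced (r : nat) (w : fword r) : bool := freduce w == w.

Definition fmul (r : nat) (u v : fword r) : fword r := freduce (u ++ v).
Definition finv (r : nat) (u : fword r) : fword r :=
  rev (map (fun x : letter r => (x.1, ~~ x.2)) u).
Definition fcomm (r : nat) (u v : fword r) : fword r :=
  freduce (u ++ v ++ finv u ++ finv v).

(* exponent sum of the generator x_k in a word: the k-th coordinate of the *)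
(* abelianization map F_r -> Z^r                                           *)
Definition expsum (r : nat) (w : fword r) (k : 'I_r) : int :=
  \sum_(x <- w | x.1 == k) (if x.2 then (-1)%R else 1%R).

(* Homomorphisms from the surface group                                    *)
(*   pi = < a_1,b_1,...,a_g,b_g | prod_i [a_i,b_i] = 1 >                   *)
(* to F_r are exactly assignments qa, qb : 'I_g -> F_r of the generators   *)
(* satisfying the surface relation.                                        *)
Definition surface_hom (g r : nat) (qa qb : 'I_g -> fword r) : Prop :=
  (forall i, freduced (qa i)) /\ (forall i, freduced (qb i)) /\
  freduce (flatten [seq fcomm (qa i) (qb i) | i <- enum 'I_g]) = [::].

Definition gen_image (g r : nat) (qa qb : 'I_g -> fword r)
    (s : ('I_g + 'I_g) * bool) : fword r :=
  let w := match s.1 with inl i => qa i | inr i => qb i end in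
  if s.2 then finv w else w.

Definition surface_hom_surj (g r : nat) (qa qb : 'I_g -> fword r) : Prop :=
  forall w : fword r, freduced w ->
    exists s : seq (('I_g + 'I_g) * bool),
      freduce (flatten (map (gen_image qa qb) s)) = w.

(* pi^ab / p = ('F_p)^(2g) with basis a_1..a_g (indices lshift g i) and     *)
(* b_1..b_g (indices rshift g i); Q^ab/p = ('F_p)^r.  The induced map       *)
(* pi^ab/p -> Q^ab/p acting on row vectors is the matrix whose row for a    *)
(* generator is the mod-p exponent-sum vector of its image.                *)
Definition ab_mod_p_map (p g r : nat) (qa qb : 'I_g -> fword r)
  : 'M['F_p]_(g + g, r) :=
  \matrix_(j < g + g, k < r)
     ((expsum (match split j with inl i => qa i | inr i => qb i end) k)%:~R).

From mathcomp Require Import all_boot all_order all_algebra.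
Import GRing.Theory.
Local Open Scope ring_scope.

(* The homomorphisms used send each generator a_i, b_i either to 1
   or to a free generator x_k.  The induced map on abelianizations mod p is
   then a 0/1 matrix, and the image of H is spanned by sums of columns of H
   (columns are indexed by a_1..a_g, b_1..b_g).  If two independent columns
   of H do not form a handle {a_i, b_i}, send them to x_0, x_1 and everything
   else to 1: every commutator [a_i, b_i] dies.  Otherwise all columns outside
   one handle {a_i, b_i} vanish, and a second handle j is used:
   a_i, b_j |-> x_0 and b_i, a_j |-> x_1, so that the surface relation becomes
   [x_0, x_1] [x_1, x_0] = 1 while H still maps onto columns a_i, b_i. *)

Definition ord_pair {T : Type} (a b : T) : 'I_2 -> T :=
  fun k => if k == ord0 then a else b.

Lemma ord_pair_inj {T : eqType} {a b : T} : a != b -> injective (ord_pair a b).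
Proof.
move=> neq_ab [[|[|?]] ?] [[|[|?]] ?] //= eq_ab; try exact: val_inj.
all: by move: eq_ab neq_ab; rewrite /ord_pair /= => ->; rewrite eqxx.
Qed.

Section RowPairs.
Context {F : fieldType} {m n : nat} {A : 'M[F]_(m, n)}.

Lemma rowsub_pair_sub a b k (B : 'M[F]_(k, n)) :
  (rowsub (ord_pair a b) A <= B)%MS = (row a A <= B)%MS && (row b A <= B)%MS.
Proof.
apply/row_subP/andP => [sub | [subA subB] k'].
  by split; [move: (sub ord0) | move: (sub ord_max)]; rewrite row_rowsub.
by rewrite row_rowsub /ord_pair; case: ifP.
Qed.

Lemma row_sub_rowsub_pair a b :
  (row a A <= rowsub (ord_pair a b) A)%MS /\ (row b A <= rowsub (ord_pair a b) A)%MS.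
Proof. by apply/andP; rewrite -rowsub_pair_sub. Qed.

Lemma mxrank_rowsub_pairC a b :
  \rank (rowsub (ord_pair a b) A) = \rank (rowsub (ord_pair b a) A).
Proof.
have sub c d : (rowsub (ord_pair c d) A <= rowsub (ord_pair d c) A)%MS.
  by have [? ?] := row_sub_rowsub_pair d c; rewrite rowsub_pair_sub; apply/andP.
by apply/eqP; rewrite eqn_leq !mxrankS.
Qed.

Lemma mxrank_rowsub_pair_le1 {a b} : row b A != 0 ->
  (\rank (rowsub (ord_pair a b) A) <= 1)%N -> (row a A <= row b A)%MS.
Proof.
move=> nz_b rank_le1; have [sub_a sub_b] := row_sub_rowsub_pair a b.
apply: submx_trans sub_a _; rewrite -(mxrank_leqif_sup sub_b).2.
by rewrite eqn_leq mxrankS // rank_rV nz_b (leq_trans rank_le1).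
Qed.

Lemma mxrank_rowsub_pair_neq {a b} :
  (1 < \rank (rowsub (ord_pair a b) A))%N -> a != b.
Proof.
apply: contraTneq => ->; rewrite -leqNgt.
have : (rowsub (ord_pair b b) A <= row b A)%MS by rewrite rowsub_pair_sub submx_refl.
by move/mxrankS/leq_trans; apply; apply: rank_leq_row.
Qed.

Lemma exists_row_neq0 : A != 0 -> exists a, row a A != 0.
Proof.
move=> nzA; case: (pickP (fun a => row a A != 0)) => [a ? | zero]; first by exists a.
by case/eqP: nzA; apply/row_matrixP => a; rewrite row0; apply/eqP/negbFE/zero.
Qed.

Lemma exists_rowsub_pair_rank2 : (1 < \rank A)%N ->
  exists a b, (1 < \rank (rowsub (ord_pair a b) A))%N.
Proof.
move=> rankA; have [a nz_a] : exists a, row a A != 0.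
  by apply: exists_row_neq0; apply: contraTneq rankA => ->; rewrite mxrank0.
case: (pickP (fun b => 1 < \rank (rowsub (ord_pair a b) A))%N) => [b ? | none].
  by exists a, b.
have : (A <= row a A)%MS.
  apply/row_subP => b; apply: mxrank_rowsub_pair_le1 => //.
  by rewrite mxrank_rowsub_pairC leqNgt none.
by move/mxrankS; rewrite rank_rV nz_a => /(leq_trans rankA).
Qed.

Lemma rowsub_pair_rank2_extend {a b c} :
  (1 < \rank (rowsub (ord_pair a b) A))%N -> row c A != 0 ->
  (1 < \rank (rowsub (ord_pair a c) A))%N \/ (1 < \rank (rowsub (ord_pair b c) A))%N.
Proof.
move=> rank_ab nz_c; apply/orP; apply: contraTT rank_ab; rewrite negb_or -!leqNgt.
case/andP=> /(mxrank_rowsub_pair_le1 nz_c) sub_a /(mxrank_rowsub_pair_le1 nz_c) sub_b.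
have := mxrankS (_ : rowsub (ord_pair a b) A <= row c A)%MS.
by rewrite rank_rV nz_c; apply; rewrite rowsub_pair_sub sub_a.
Qed.

End RowPairs.

Lemma split_lshift m n (i : 'I_m) : split (lshift n i) = inl i.
Proof. exact: (unsplitK (inl i)). Qed.

Lemma split_rshift m n (i : 'I_n) : split (rshift m i) = inr i.
Proof. exact: (unsplitK (inr i)). Qed.

Definition partner (g : nat) (x : 'I_(g + g)) : 'I_(g + g) :=
  match split x with inl i => rshift g i | inr i => lshift g i end.
Arguments partner {g}.

Lemma partner_lshift g (i : 'I_g) : partner (lshift g i) = rshift g i.
Proof. by rewrite /partner split_lshift. Qed.

Lemma partner_rshift g (i : 'I_g) : partner (rshift g i) = lshift g i.
Proof. by rewrite /partner split_rshift. Qed.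

Lemma partnerK g : involutive (@partner g).
Proof.
move=> x; rewrite -(splitK x).
by case: (split x) => i /=;
  [rewrite partner_lshift partner_rshift | rewrite partner_rshift partner_lshift].
Qed.

Lemma partner_neq g (x : 'I_(g + g)) : partner x != x.
Proof.
rewrite /partner -{2}(splitK x).
by case: (split x) => i /=; rewrite ?eq_lrshift ?eq_rlshift.
Qed.

Lemma flatten_map_filter {T U : Type} (f : T -> seq U) (P : pred T) s :
  (forall x, ~~ P x -> f x = [::]) ->
  flatten (map f s) = flatten (map f (filter P s)).
Proof. by move=> f0; elim: s => //= x s ->; case: ifP => // /negbT /f0 ->. Qed.

Lemma filter_enum_pred2 {T : finType} {i j : T} : i != j ->
  [seq x <- enum T | pred2 i j x] = [:: i; j] \/
  [seq x <- enum T | pred2 i j x] = [:: j; i].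
Proof.
move=> neq_ij; set s := filter _ _.
have uniq_s : uniq s by rewrite filter_uniq ?enum_uniq.
have mem_s : s =i [:: i; j] by move=> x; rewrite mem_filter mem_enum andbT !inE.
have /perm_size : perm_eq s [:: i; j] by apply: uniq_perm; rewrite //= inE neq_ij.
case: s uniq_s mem_s => [|x [|y []]] //= /andP[+ _] mem_s _; rewrite inE => neq_xy.
move: (mem_s x) (mem_s y); rewrite !inE !eqxx orbT /= => /esym x_ij /esym y_ij.
by case/orP: x_ij y_ij neq_xy => /eqP-> /orP[] /eqP->; rewrite ?eqxx // => _;
  [left | right].
Qed.

Lemma fcomm_letter_nil r (x : letter r) : fcomm [:: x] [::] = [::].
Proof. by case: x => k b; rewrite /fcomm /freduce /= eqxx; case: b. Qed.

Lemma fcomm_nil_letter r (x : letter r) : fcomm [::] [:: x] = [::].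
Proof. by case: x => k b; rewrite /fcomm /freduce /= eqxx; case: b. Qed.

Section GeneratorAssignment.
Context {g r : nat} (t : 'I_(g + g) -> option 'I_r).

Definition gen_word (x : 'I_(g + g)) : fword r :=
  if t x is Some k then [:: (k, false)] else [::].

Definition assign_a (i : 'I_g) := gen_word (lshift g i).
Definition assign_b (i : 'I_g) := gen_word (rshift g i).

Lemma assign_split x :
  match split x with inl i => assign_a i | inr i => assign_b i end = gen_word x.
Proof. by rewrite -[in RHS](splitK x); case: (split x). Qed.

Lemma freduced_gen_word x : freduced (gen_word x).
Proof. by rewrite /freduced /gen_word; case: (t x) => //= k; rewrite eqxx. Qed.

Lemma expsum_gen_word x k : expsum (gen_word x) k = (t x == Some k)%:R.
Proof.
rewrite /expsum /gen_word; case: (t x) => [k'|]; last by rewrite big_nil.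
by rewrite big_cons big_nil (inj_eq Some_inj); case: eqP; rewrite ?addr0.
Qed.

Lemma ab_mod_p_map_assign p :
  ab_mod_p_map p assign_a assign_b = \matrix_(x, k) (t x == Some k)%:R.
Proof.
by apply/matrixP => x k; rewrite !mxE assign_split expsum_gen_word; case: eqP.
Qed.

Lemma mul_assign_mx {R : nzRingType} {m} (M : 'M[R]_(m, g + g))
    {c : 'I_r -> 'I_(g + g)} :
  (forall k, t (c k) = Some k) ->
  (forall x k, t x = Some k -> x != c k -> col x M = 0) ->
  M *m \matrix_(x, k) (t x == Some k)%:R = colsub c M.
Proof.
move=> t_c col0; apply/matrixP => y k.
rewrite !mxE (bigD1 (c k)) //= mxE t_c eqxx mulr1 big1 ?addr0 // => x neq_x.
rewrite mxE; case: eqP => [t_x|_]; last by rewrite mulr0.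
by move/colP/(_ y): (col0 x k t_x neq_x); rewrite !mxE => ->; rewrite mul0r.
Qed.

Lemma surface_hom_surj_assign {c : 'I_r -> 'I_(g + g)} :
  (forall k, t (c k) = Some k) -> surface_hom_surj assign_a assign_b.
Proof.
move=> t_c w /eqP w_red; exists [seq (split (c x.1), x.2) | x <- w].
rewrite -[RHS]w_red; congr freduce; elim: w {w_red} => //= -[k b] w ->.
by rewrite /gen_image /= assign_split /gen_word t_c; case: b.
Qed.

Lemma surface_hom_assign_disjoint :
  (forall i, t (lshift g i) = None \/ t (rshift g i) = None) ->
  surface_hom assign_a assign_b.
Proof.
move=> disj; split; [|split]; try by move=> i; apply: freduced_gen_word.
rewrite (flatten_map_filter _ xpred0) => [|i _]; first by elim: (enum _).
rewrite /assign_a /assign_b /gen_word.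
by case: (disj i) => ->; case: (t _) => [k|] //;
  rewrite ?fcomm_letter_nil ?fcomm_nil_letter.
Qed.

End GeneratorAssignment.

Section SymplecticAssignment.
Context {g : nat} (i j : 'I_g).
Hypothesis neq_ij : i != j.

Definition symplectic_assign (x : 'I_(g + g)) : option 'I_2 :=
  match split x with
  | inl l => if l == i then Some ord0 else if l == j then Some ord_max else None
  | inr l => if l == i then Some ord_max else if l == j then Some ord0 else None
  end.

Let x0 : letter 2 := (ord0, false).
Let x1 : letter 2 := (ord_max, false).

Lemma fcomm_symplectic_assign l :
  fcomm (assign_a symplectic_assign l) (assign_b symplectic_assign l) =
  if l == i then fcomm [:: x0] [:: x1]
  else if l == j then fcomm [:: x1] [:: x0] else [::].
Proof.
rewrite /assign_a /assign_b /gen_word /symplectic_assign split_lshift split_rshift.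
by case: ifP => _; [|case: ifP].
Qed.

Lemma surface_hom_symplectic :
  surface_hom (assign_a symplectic_assign) (assign_b symplectic_assign).
Proof.
split; [|split]; try by move=> l; apply: freduced_gen_word.
rewrite (flatten_map_filter _ (pred2 i j)) => [|l /norP[/negPf ni /negPf nj]].
  have neq_ji : (j == i) = false by rewrite eq_sym (negPf neq_ij).
  by case: (filter_enum_pred2 neq_ij) => -> /=;
    rewrite !fcomm_symplectic_assign !eqxx ?neq_ji ?(negPf neq_ij).
by rewrite fcomm_symplectic_assign ni nj.
Qed.

End SymplecticAssignment.

Definition free_quotient_onto (p g r : nat) (H : 'M['F_p]_(g + g)) : Prop :=
  exists qa qb : 'I_g -> fword r,
    surface_hom qa qb /\ surface_hom_surj qa qb /\
    row_full (H *m ab_mod_p_map p qa qb).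

Definition pick_assign {g r : nat} (c : 'I_r -> 'I_(g + g)) (x : 'I_(g + g))
  : option 'I_r :=
  [pick k | c k == x].

Section Witnesses.
Variables (p g : nat) (H : 'M['F_p]_(g + g)).

Lemma assign_witness {r} {t : 'I_(g + g) -> option 'I_r} {c : 'I_r -> 'I_(g + g)} :
  surface_hom (assign_a t) (assign_b t) ->
  (forall k, t (c k) = Some k) ->
  (forall x k, t x = Some k -> x != c k -> row x H^T = 0) ->
  (r <= \rank (rowsub c H^T))%N ->
  free_quotient_onto p g r H.
Proof.
move=> hom t_c row0 rank_c; exists (assign_a t), (assign_b t); split=> //.
split; first exact: surface_hom_surj_assign t_c.
rewrite ab_mod_p_map_assign (mul_assign_mx _ _ t_c) => [|x k t_x neq_x].
  by rewrite /row_full eqn_leq rank_leq_col -mxrank_tr trmx_mxsub.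
by apply: trmx_inj; rewrite tr_col (row0 x k) // trmx0.
Qed.

Lemma injective_witness {r} (c : 'I_r -> 'I_(g + g)) :
  injective c -> (forall k k', c k' != partner (c k)) ->
  (r <= \rank (rowsub c H^T))%N ->
  free_quotient_onto p g r H.
Proof.
move=> inj_c no_partner rank_c.
have t_c k : pick_assign c (c k) = Some k.
  by rewrite /pick_assign; case: pickP => [k' /eqP/inj_c -> // | /(_ k)]; rewrite eqxx.
have t_Some x k : pick_assign c x = Some k -> c k = x.
  by rewrite /pick_assign; case: pickP => // k' /eqP <- [<-].
apply: (assign_witness _ t_c) => [|x k /t_Some <-|//]; last by rewrite eqxx.
apply: surface_hom_assign_disjoint => i.
case t_a: (pick_assign c (lshift g i)) => [k|]; last by left.
case t_b: (pick_assign c (rshift g i)) => [k'|]; last by right.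
have := no_partner k k'.
by rewrite (t_Some _ _ t_a) (t_Some _ _ t_b) partner_lshift eqxx.
Qed.

Lemma rank1_witness : (0 < \rank H)%N -> free_quotient_onto p g 1 H.
Proof.
rewrite -mxrank_tr lt0n mxrank_eq0 => /exists_row_neq0[a nz_a].
apply: (injective_witness (fun=> a)).
- by move=> k k' _; rewrite (ord1 k) (ord1 k').
- by move=> _ _; rewrite eq_sym partner_neq.
- by rewrite -rowEsub rank_rV nz_a.
Qed.

Lemma pair_witness a b :
  (1 < \rank (rowsub (ord_pair a b) H^T))%N -> b != partner a ->
  free_quotient_onto p g 2 H.
Proof.
move=> rank_ab b_neq; have a_neq : a != partner b.
  by apply: contra b_neq => /eqP->; rewrite partnerK.
have inj_ab := ord_pair_inj (mxrank_rowsub_pair_neq rank_ab).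
apply: injective_witness inj_ab _ rank_ab.
by move=> k k'; rewrite /ord_pair; do 2 case: ifP => _; rewrite // eq_sym partner_neq.
Qed.

Lemma symplectic_witness i : (1 < g)%N ->
  (1 < \rank (rowsub (ord_pair (lshift g i) (rshift g i)) H^T))%N ->
  (forall x, x != lshift g i -> x != rshift g i -> row x H^T = 0) ->
  free_quotient_onto p g 2 H.
Proof.
move=> g_gt1 rank_i row0.
have [j neq_ij] : exists j : 'I_g, i != j.
  pose j0 := Ordinal (ltnW g_gt1); pose j1 := Ordinal g_gt1.
  by case: (eqVneq i j0) => [->|]; [exists j1 | exists j0].
apply: (assign_witness (surface_hom_symplectic i j neq_ij)) rank_i.
- by case=> [[|[|?]] ?] //=;
    rewrite /symplectic_assign ?split_lshift ?split_rshift eqxx;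
    congr Some; apply: val_inj.
- by move=> x k t_x neq_x; apply: row0; apply: contra_neq neq_x => eq_x;
    move: t_x; rewrite eq_x /symplectic_assign ?split_lshift ?split_rshift eqxx => -[<-].
Qed.

Lemma rank2_witness : (1 < g)%N -> (1 < \rank H)%N -> free_quotient_onto p g 2 H.
Proof.
rewrite -mxrank_tr => g_gt1 /exists_rowsub_pair_rank2[a [b rank_ab]].
have [b_partner | ] := eqVneq b (partner a); last exact: pair_witness.
case: (pickP (fun c => [&& row c H^T != 0, c != a & c != b])) => [c | row0].
  case/and3P=> nz_c neq_ca neq_cb.
  case: (rowsub_pair_rank2_extend rank_ab nz_c) => /pair_witness; apply.
    by rewrite -b_partner.
  by rewrite b_partner partnerK.
have {}row0 x : x != a -> x != b -> row x H^T = 0.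
  move=> neq_xa neq_xb; apply/eqP.
  by move: (row0 x); rewrite neq_xa neq_xb !andbT => /negbFE.
rewrite b_partner -(splitK a) in rank_ab row0; case: (split a) rank_ab row0 => i /=.
  by rewrite partner_lshift; apply: symplectic_witness g_gt1.
rewrite partner_rshift mxrank_rowsub_pairC => rank_i row0.
by apply: symplectic_witness rank_i _ => // x neq_l neq_r; apply: row0.
Qed.

End Witnesses.

(* A subgroup H of pi^ab/p = ('F_p)^(2g) is an F_p-subspace, represented as
   the row space of a square matrix H; its rank is \rank H. *)
Theorem lemma11 (p g r : nat) (Hp : prime p) (Hg : (2 <= g)%N)
    (Hr : (1 <= r <= 2)%N) (H : 'M['F_p]_(g + g)) (HH : (r <= \rank H)%N) :
  exists (qa qb : 'I_g -> fword r),
    surface_hom qa qb /\ surface_hom_surj qa qb /\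
    row_full (H *m ab_mod_p_map p qa qb).
Proof.
case: r Hr HH => [|[|[|r]]] // _ rank_H; first exact: rank1_witness rank_H.
exact: rank2_witness Hg rank_H.
Qed.
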